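(* Let $D$ be a crossing optimal normalized 2-page book drawing of $K_n$ and $0\le k\le\lfloor n/2\rfloor-2$. Then every $\le k$-edge $ij$ ($i<j$) of $D$ satisfies $i\le k+1$ or $j\ge n-k$; that is, all entries of $M(D)$ representing $\le k$-edges lie in the union of the first $k+1$ rows and the last $k+1$ columns of $M(D)$.
   Context: Normalized 2-page book drawing of $K_n$: vertices $(1,0),\dots,(n,0)$ labelled $1,\dots,n$; edges $i(i+1)$ on the spine; edge $1n$ in the upper half-plane; every other edge $ij$ a semicircle over $[i,j]$ in the upper or lower half-plane. $M(D)$ has entries $(i,j)$, $1\le i<j\le n$ (row $i$, column $j$), representing edge $ij$; its columns are indexed $2,\dots,n$. For distinct vertices $p,q,r$, $r$ is on the left (right) of $\overrightarrow{pq}$ if the triangle with edges $pq,qr,rp$ traced in order $p,q,r$ is counterclockwise (clockwise); an edge is a $k$-edge if exactly $k$ of the other $n-2$ vertices lie on one side of it; each edge has a unique such index in $\{0,\dots,\lfloor n/2\rfloor-1\}$, and a $\le k$-edge is one with index at most $k$. Crossing optimal: exactly $Z(n)=\frac14\lfloor\frac n2\rfloor\lfloor\frac{n-1}2\rfloor\lfloor\frac{n-2}2\rfloor\lfloor\frac{n-3}2\rfloor$ crossings. *)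

From mathcomp Require Import all_boot.
Set Implicit Arguments. Unset Strict Implicit. Unset Printing Implicit Defensive.

(* A normalized 2-page book drawing of K_n, vertices 1..n at (1,0),...,(n,0).
   Spine edges i(i+1) lie on the spine; every other edge ij (i<j, j >= i+2)
   is a semicircle over [i,j] in the upper (page i j = true) or lower
   (page i j = false) half-plane.  Values of [page] outside
   { (i,j) | 1 <= i, i+2 <= j <= n } are irrelevant. *)
Definition drawing := nat -> nat -> bool.

Definition normalized (n : nat) (D : drawing) : Prop := D 1 n = true.

(* Two semicircles cross (exactly once) iff they lie on the same page and their
   endpoints interleave, i < k < j < l; no other pair of edges crosses. *)
Definition crossings (n : nat) (D : drawing) : nat :=
  \sum_(1 <= i < n.+1) \sum_(1 <= k < n.+1) \sum_(1 <= j < n.+1)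
  \sum_(1 <= l < n.+1) [&& i < k, k < j, j < l & D i j == D k l].

Definition Z (n : nat) : nat :=
  (n./2 * (n - 1)./2 * (n - 2)./2 * (n - 3)./2) %/ 4.

Definition crossing_optimal (n : nat) (D : drawing) : Prop :=
  crossings n D = Z n.

(* Orientation of the triangle with edges pq, qr, rp traced p,q,r
   (for distinct p,q,r): true = counterclockwise.  For a < b < c the
   triangle a->b->c->a is counterclockwise iff the edge ac is in the upper
   half-plane (the arcs ab, bc lie inside the region bounded by the
   semicircle ac and the spine); cyclic rotations keep the orientation,
   transpositions reverse it. *)
Definition ccw (D : drawing) (p q r : nat) : bool :=
  if (p < q) && (q < r) then D p r
  else if (q < r) && (r < p) then D q p
  else if (r < p) && (p < q) then D r q
  else if (p < r) && (r < q) then ~~ D p q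
  else if (q < p) && (p < r) then ~~ D q r
  else ~~ D r p.

(* r is on the left of the directed edge pq iff ccw p q r; on the right iff
   the triangle is clockwise. *)
Definition left_count (n : nat) (D : drawing) (p q : nat) : nat :=
  \sum_(1 <= r < n.+1) [&& r != p, r != q & ccw D p q r].

Definition right_count (n : nat) (D : drawing) (p q : nat) : nat :=
  \sum_(1 <= r < n.+1) [&& r != p, r != q & ~~ ccw D p q r].

(* The index k of an edge: exactly k of the other n-2 vertices lie on one side;
   the unique such value in {0, ..., floor(n/2)-1} is the minimum. *)
Definition edge_index (n : nat) (D : drawing) (i j : nat) : nat :=
  minn (left_count n D i j) (right_count n D i j).

From mathcomp Require Import all_boot zify.
Set Implicit Arguments. Unset Strict Implicit. Unset Printing Implicit Defensive.

(* For an edge ab with L vertices on its left and R on its right, summing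
   the L(L-1) + R(R-1) ordered pairs of vertices on a common side of ab over
   all edges gives 2 (3 C(n,4) + cr(D)): in a 4-set, three of its six edges
   have the other two vertices on a common side, plus a fourth exactly when
   its two interleaving arcs lie on the same page, i.e. cross.  Since
   L + R = n - 2, L(L-1) + R(R-1) equals its value for a balanced edge plus a
   positive combination, over j, of the shortfalls (j - L) + (j - R).
   Removing the leftmost vertex and inducting shows that already the edges in
   the first j rows and last j columns of M(D) have total j-shortfall at least
   3 C(j+2,3), and these bounds add up to exactly 2 (3 C(n,4) + Z(n)).  In an
   optimal drawing all of them are therefore tight, whereas a <=k-edge outside
   the first k+1 rows and last k+1 columns would add a positive
   (k+1)-shortfall. *)

Lemma sum_nat_eq lo hi a : \sum_(lo <= r < hi) (r == a) = (lo <= a < hi).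
Proof.
elim: hi => [|hi IH]; first by rewrite big_geq // ltn0 andbF.
case: (leqP lo hi) => H; last by rewrite big_geq //; case: andP => // -[]; lia.
rewrite big_nat_recr //= IH.
case: (ltngtP a hi) => h.
- by rewrite addn0 ltnS (ltnW h).
- by rewrite addn0 ltnS (leqNgt a hi) h andbF.
- by rewrite h ltnSn H andbF.
Qed.

Lemma sum_nat_bool_leq lo hi (P : nat -> bool) : \sum_(lo <= r < hi) P r <= hi - lo.
Proof.
rewrite -[hi - lo]muln1 -sum_nat_const_nat; apply: leq_sum => i _; by case: (P i).
Qed.

Lemma leq_sum_nat m n (F G : nat -> nat) : (forall i, m <= i < n -> F i <= G i) ->
  \sum_(m <= i < n) F i <= \sum_(m <= i < n) G i.
Proof.
move=> FG; rewrite big_nat_cond [X in _ <= X]big_nat_cond.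
by apply: leq_sum => i /andP[hi _]; exact: FG.
Qed.

Lemma leq_term_sum_nat lo hi (F : nat -> nat) i : lo <= i < hi -> F i <= \sum_(lo <= a < hi) F a.
Proof.
move=> /andP[h1 h2]; rewrite (big_cat_nat (n:=i)) //=; last exact: ltnW.
rewrite [X in _ + X]big_ltn //; lia.
Qed.

Lemma ltn_sum_nat m n (F G : nat -> nat) i : (forall j, m <= j < n -> F j <= G j) ->
  m <= i < n -> F i < G i -> \sum_(m <= j < n) F j < \sum_(m <= j < n) G j.
Proof.
move=> FG /andP[mi in_] FGi.
rewrite (big_cat_nat (n:=i)) ?(ltnW in_) // [X in _ < X](big_cat_nat (n:=i)) ?(ltnW in_) //=.
rewrite !(big_ltn in_) addnCA [X in _ < X]addnCA -addSn.
apply: leq_add FGi (leq_add _ _); apply: leq_sum_nat => j /andP[j1 j2]; apply: FG; lia.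
Qed.

Lemma sum_nat_mul_eq lo hi r (F : nat -> nat) :
  \sum_(lo <= s < hi) (r == s) * F s = (lo <= r < hi) * F r.
Proof.
rewrite (eq_bigr (fun s => (s == r) * F r)); last by move=> s _; rewrite eq_sym; case: eqP => [->|].
by rewrite -big_distrl /= sum_nat_eq.
Qed.

Lemma sum_nat_reindex (F : nat -> nat) s K (f : nat -> nat) :
  {in [pred x | s <= x < s + K] &, injective F} ->
  (forall x, s <= x < s + K -> F x < K) ->
  \sum_(s <= x < s + K) f (F x) = \sum_(0 <= v < K) f v.
Proof.
move=> Finj Frng.
rewrite /index_iota addKn subn0 -(big_map F xpredT f); apply: perm_big.
have Funiq : uniq (map F (iota s K)).
  by rewrite map_inj_in_uniq ?iota_uniq // => x y; rewrite !mem_iota; exact: Finj.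
have Fsub : {subset map F (iota s K) <= iota 0 K}.
  by move=> v /mapP[x]; rewrite mem_iota => hx ->; rewrite mem_iota add0n /=; exact: Frng.
have [_ E] := uniq_min_size Funiq Fsub (ltac:(by rewrite size_map !size_iota)).
exact: uniq_perm (iota_uniq _ _) E.
Qed.

Lemma sum_subn_binom2 c : \sum_(0 <= v < c) (c - v) = 'C(c.+1, 2).
Proof.
elim: c => [|c IH]; first by rewrite big_geq.
rewrite big_nat_recr //= binS bin1 -IH.
rewrite (eq_big_nat _ _ (F2 := fun v => (c - v) + 1)); last by move=> v /andP[_ hv]; lia.
rewrite big_split /= sum_nat_const_nat muln1 subn0; lia.
Qed.

Lemma sum_subn_binom2_widen c K : c <= K -> \sum_(0 <= v < K) (c - v) = 'C(c.+1, 2).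
Proof.
move=> cK; rewrite (big_cat_nat (n:=c)) //= sum_subn_binom2.
by rewrite big_nat_cond big1 ?addn0 // => v /andP[/andP[cv _] _]; lia.
Qed.

Lemma sum_subn_rev_binom2 c K : c <= K -> \sum_(0 <= v < K) (c - (K.-1 - v)) = 'C(c.+1, 2).
Proof.
move=> cK; rewrite big_nat_rev /= -(sum_subn_binom2_widen cK).
by apply: eq_big_nat => v /andP[_ hv]; lia.
Qed.

Lemma sum_leq_bool x K : x < K -> \sum_(0 <= v < K) (v <= x) = x.+1.
Proof.
move=> xK; rewrite (big_cat_nat (n:=x.+1)) //=.
rewrite (eq_big_nat _ _ (F2 := fun _ => 1)); last by move=> v /andP[_ hv]; rewrite -ltnS hv.
rewrite sum_nat_const_nat muln1 subn0 big_nat_cond big1 ?addn0 //.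
by move=> v /andP[/andP[hv _] _]; rewrite leqNgt hv.
Qed.

Lemma sum_succ_binom2 j : \sum_(0 <= t < j.+1) t.+1 = 'C(j.+2, 2).
Proof.
elim: j => [|j IH]; first by rewrite big_nat1.
by rewrite big_nat_recr //= IH [in RHS]binS bin1 addnC.
Qed.

Lemma sum_binom_hockey m N : \sum_(0 <= u < N) 'C(u, m) = 'C(N, m.+1).
Proof.
elim: N => [|N IH]; first by rewrite big_geq.
by rewrite big_nat_recr //= IH [in RHS]binS.
Qed.

Lemma sum_binom3_hockey M : 1 <= M -> \sum_(1 <= j < M) 'C(j.+2, 3) = 'C(M.+2, 4).
Proof.
elim: M => // M IH hM.
case: (posnP M) => h0; first by rewrite h0 big_geq.
by rewrite big_nat_recr //= IH // [in RHS]binS.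
Qed.

Lemma sum_gt_binom m z n : z <= n ->
  \sum_(1 <= t < n.+1) (z < t) * 'C(n - t, m) = 'C(n - z, m.+1).
Proof.
move=> zn; rewrite (big_cat_nat (n:=z.+1)) /=; [|lia|lia].
rewrite big_nat_cond big1 ?add0n; last by move=> t /andP[/andP[_ tz] _]; rewrite ltnNge -ltnS tz.
rewrite (eq_big_nat _ _ (F2 := fun t => 'C(n - t, m))); last by move=> t /andP[-> _]; rewrite mul1n.
rewrite big_nat_rev /= -{1}(add0n z.+1) big_addn -sum_binom_hockey subSS.
by apply: eq_big_nat => i /andP[_ hi]; congr 'C(_, _); lia.
Qed.

Lemma sum_binom_subn m n : \sum_(1 <= t < n.+1) 'C(n - t, m) = 'C(n, m.+1).
Proof.
rewrite -[in RHS](subn0 n) -(sum_gt_binom m (leq0n n)).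
by apply: eq_big_nat => t /andP[ht _]; rewrite ht mul1n.
Qed.

Lemma sum_ltn_pairs n : \sum_(1 <= a < n.+1) \sum_(1 <= b < n.+1) (a < b) = 'C(n, 2).
Proof.
rewrite -sum_binom_subn; apply: eq_big_nat => a /andP[_ ha].
by rewrite -sum_gt_binom; [apply: eq_bigr => b _; rewrite bin0 muln1 | lia].
Qed.

Lemma binom2_mul x : 'C(x, 2) * 2 = x * x.-1.
Proof. by rewrite mulnC -(@mul_bin_diag x 1) bin1. Qed.

Lemma binom3_mul m : 'C(m.+2, 3) * 6 = m.+2 * m.+1 * m.
Proof. rewrite (_ : 6 = 3`!) // bin_ffact /= !ffactnS /= ffactn0; lia. Qed.

Lemma binom4_mul m : 'C(m.+3, 4) * 24 = m.+3 * m.+2 * m.+1 * m.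
Proof. rewrite (_ : 24 = 4`!) // bin_ffact /= !ffactnS /= ffactn0; lia. Qed.

Definition shortfall j L R := (j - L) + (j - R).

(* Edge ab lies in the first j rows or the last j columns of M(D) restricted
   to the vertices lo, ..., n. *)
Definition in_border lo n j a b := (a < lo + j) || (n - j < b).

Ltac ccw_cases := rewrite /ccw; repeat (case: ifP => /= [/andP[? ?]|?]); try lia; done.

Section SideCounts.
Variable D : drawing.

Lemma ccw123 p q r : p < q -> q < r -> ccw D p q r = D p r. Proof. move=> *; ccw_cases. Qed.
Lemma ccw312 p q r : r < p -> p < q -> ccw D p q r = D r q. Proof. move=> *; ccw_cases. Qed.
Lemma ccw132 p q r : p < r -> r < q -> ccw D p q r = ~~ D p q. Proof. move=> *; ccw_cases. Qed.

(* Side counts of ab in the subdrawing induced by the vertices lo, ..., hi;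
   [left_count n D] is [lcount D 1 n]. *)
Definition lcount lo hi a b := \sum_(lo <= r < hi.+1) [&& r != a, r != b & ccw D a b r].
Definition rcount lo hi a b := \sum_(lo <= r < hi.+1) [&& r != a, r != b & ~~ ccw D a b r].

Lemma lcount_add_rcount lo hi a b : a != b -> lo <= a <= hi -> lo <= b <= hi ->
  lcount lo hi a b + rcount lo hi a b = hi.+1 - lo - 2.
Proof.
move=> nab /andP[la ah] /andP[lb bh].
have E : lcount lo hi a b + rcount lo hi a b + (\sum_(lo <= r < hi.+1) (r == a))
   + (\sum_(lo <= r < hi.+1) (r == b)) = hi.+1 - lo.
  rewrite -[hi.+1 - lo]muln1 -sum_nat_const_nat /lcount /rcount -!big_split /=.
  apply: eq_bigr => r _.
  case: (ccw D a b r); case: (eqVneq r a) => [->|ra]; rewrite ?eqxx ?(negbTE nab) //=;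
  by case: (eqVneq r b).
rewrite !sum_nat_eq la lb (leq_ltn_trans ah (ltnSn _)) (leq_ltn_trans bh (ltnSn _)) in E.
lia.
Qed.

Lemma lcount_recl lo hi a b : lo < a -> lo < b -> lo <= hi ->
  lcount lo hi a b = ccw D a b lo + lcount lo.+1 hi a b.
Proof. by move=> la lb lh; rewrite /lcount big_ltn ?ltnS // (ltn_eqF la) (ltn_eqF lb). Qed.

Lemma rcount_recl lo hi a b : lo < a -> lo < b -> lo <= hi ->
  rcount lo hi a b = ~~ ccw D a b lo + rcount lo.+1 hi a b.
Proof. by move=> la lb lh; rewrite /rcount big_ltn ?ltnS // (ltn_eqF la) (ltn_eqF lb). Qed.

Lemma lcount_shrink_hi lo hi hi' a b : lo <= hi'.+1 -> hi' <= hi ->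
  lcount lo hi a b <= lcount lo hi' a b + (hi - hi').
Proof.
move=> h1 h2; rewrite /lcount (big_cat_nat (n:=hi'.+1)) /=; [|lia|lia].
by rewrite leq_add2l; apply: leq_trans (sum_nat_bool_leq _ _ _) _; lia.
Qed.

Lemma rcount_shrink_hi lo hi hi' a b : lo <= hi'.+1 -> hi' <= hi ->
  rcount lo hi a b <= rcount lo hi' a b + (hi - hi').
Proof.
move=> h1 h2; rewrite /rcount (big_cat_nat (n:=hi'.+1)) /=; [|lia|lia].
by rewrite leq_add2l; apply: leq_trans (sum_nat_bool_leq _ _ _) _; lia.
Qed.

Lemma lcount_from_lo lo hi b : lo < b <= hi ->
  lcount lo hi lo b = (b - lo.+1) * ~~ D lo b + \sum_(b.+1 <= r < hi.+1) D lo r.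
Proof.
move=> /andP[lb bh]; rewrite /lcount big_ltn; last lia.
rewrite eqxx /= add0n (big_cat_nat (n:=b)) /=; [|lia|lia].
rewrite (big_ltn (m:=b)); last lia.
rewrite eqxx andbF add0n; congr (_ + _).
- rewrite (eq_big_nat _ _ (F2 := fun _ => nat_of_bool (~~ D lo b))).
    by rewrite sum_nat_const_nat mulnC.
  by move=> r /andP[r1 r2]; rewrite (gtn_eqF r1) (ltn_eqF r2) ccw132.
- apply: eq_big_nat => r /andP[r1 r2].
  by rewrite (gtn_eqF (ltn_trans lb r1)) (gtn_eqF r1) ccw123.
Qed.

Lemma lcount_from_lo_inj lo hi b b' : lo < b -> b < b' -> b' <= hi ->
  lcount lo hi lo b <> lcount lo hi lo b'.
Proof.
move=> h1 h2 h3; rewrite !lcount_from_lo; [|lia|lia].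
rewrite (big_cat_nat (n:=b')) /=; [|lia|lia].
rewrite (big_ltn (m:=b')); last lia.
have := sum_nat_bool_leq (b.+1) b' (fun r => D lo r).
case: (D lo b); case: (D lo b') => /=; lia.
Qed.

Lemma lcount_to_hi lo hi a : lo <= a < hi ->
  lcount lo hi a hi = \sum_(lo <= r < a) D r hi + (hi - a.+1) * ~~ D a hi.
Proof.
move=> /andP[la ah]; rewrite /lcount (big_cat_nat (n:=a)) /=; [|lia|lia].
rewrite (big_ltn (m:=a)); last lia.
rewrite eqxx /= add0n big_nat_recr /=; last lia.
rewrite eqxx andbF addn0; congr (_ + _).
- apply: eq_big_nat => r /andP[r1 r2].
  by rewrite (ltn_eqF r2) (ltn_eqF (ltn_trans r2 ah)) ccw312.
- rewrite (eq_big_nat _ _ (F2 := fun _ => nat_of_bool (~~ D a hi))).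
    by rewrite sum_nat_const_nat mulnC.
  by move=> r /andP[r1 r2]; rewrite (gtn_eqF r1) (ltn_eqF r2) ccw132.
Qed.

Lemma lcount_to_hi_inj lo hi a a' : lo <= a -> a < a' -> a' < hi ->
  lcount lo hi a hi <> lcount lo hi a' hi.
Proof.
move=> h1 h2 h3; rewrite !lcount_to_hi; [|lia|lia].
rewrite (big_cat_nat (n:=a) (p:=a')) /=; [|lia|lia].
rewrite (big_ltn (m:=a) (n:=a')); last lia.
have := sum_nat_bool_leq (a.+1) a' (fun r => D r hi).
case: (D a hi); case: (D a' hi) => /=; lia.
Qed.

Lemma sum_lcount_from_lo lo n f : lo < n ->
  \sum_(lo.+1 <= b < n.+1) f (lcount lo n lo b) = \sum_(0 <= v < n - lo) f v.
Proof.
move=> ln; rewrite (_ : n.+1 = lo.+1 + (n - lo)); last lia.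
have Hs b : lo.+1 <= b < lo.+1 + (n - lo) ->
    lcount lo n lo b + rcount lo n lo b = n.+1 - lo - 2.
  by move=> hb; rewrite lcount_add_rcount; [lia| |lia|lia]; apply/eqP; lia.
apply: sum_nat_reindex => [x y hx hy E|x hx]; last by have := Hs x hx; lia.
rewrite !inE in hx hy.
case: (ltngtP x y) => // hxy; exfalso.
- by apply: (@lcount_from_lo_inj lo n x y) => //; lia.
- by apply: (@lcount_from_lo_inj lo n y x) => //; lia.
Qed.

Lemma sum_side_count_to_hi lo b (c : bool) f : lo < b ->
  \sum_(lo <= a < b) f (if c then rcount lo b a b else lcount lo b a b)
  = \sum_(0 <= v < b - lo) f v.
Proof.
move=> lb; rewrite (_ : b = lo + (b - lo)); last lia.
rewrite addKn; set K := b - lo.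
have Hs a : lo <= a < lo + K ->
    lcount lo (lo + K) a (lo + K) + rcount lo (lo + K) a (lo + K) = K.+1 - 2.
  by move=> ha; rewrite lcount_add_rcount; [lia| |lia|lia]; apply/eqP; lia.
apply: sum_nat_reindex => [x y hx hy|x hx]; last by have := Hs x hx; case: c; lia.
rewrite !inE in hx hy.
have := Hs x hx; have := Hs y hy.
case: (ltngtP x y) => // hxy; case: c => E1 E2 E3; exfalso.
- by apply: (@lcount_to_hi_inj lo (lo + K) x y) => //; lia.
- by apply: (@lcount_to_hi_inj lo (lo + K) x y) => //; lia.
- by apply: (@lcount_to_hi_inj lo (lo + K) y x) => //; lia.
- by apply: (@lcount_to_hi_inj lo (lo + K) y x) => //; lia.
Qed.

Lemma lcount_corner lo b : lo < b -> lcount lo b lo b = (b - lo.+1) * ~~ D lo b.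
Proof. by move=> lb; rewrite lcount_from_lo ?lb ?leqnn // big_geq // addn0. Qed.

Definition border_shortfall lo n j := \sum_(lo <= a < n.+1) \sum_(lo <= b < n.+1)
  ((a < b) && in_border lo n j a b) * shortfall j (lcount lo n a b) (rcount lo n a b).

(* Vertex lo lies on one side of ab, so the (j+1)-shortfall of ab with lo
   present exceeds its j-shortfall without lo by exactly this indicator. *)
Definition far_side_shallow lo n j a b :=
  if ccw D a b lo then rcount lo.+1 n a b <= j else lcount lo.+1 n a b <= j.

Lemma shortfall_recl lo n j a b : lo < a -> lo < b -> lo <= n ->
  shortfall j (lcount lo.+1 n a b) (rcount lo.+1 n a b) + far_side_shallow lo n j a b
  = shortfall j.+1 (lcount lo n a b) (rcount lo n a b).
Proof.
move=> la lb ln; rewrite (lcount_recl la lb ln) (rcount_recl la lb ln).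
rewrite /far_side_shallow /shortfall; case: (ccw D a b lo) => /=.
- by case: (leqP (rcount lo.+1 n a b) j) => /= ?; lia.
- by case: (leqP (lcount lo.+1 n a b) j) => /= ?; lia.
Qed.

Lemma first_row_shortfall lo n j : 2 * j + 3 <= n - lo ->
  \sum_(lo <= b < n.+1) ((lo < b) && in_border lo n j.+1 lo b)
     * shortfall j.+1 (lcount lo n lo b) (rcount lo n lo b)
  = 2 * 'C(j.+2, 2).
Proof.
move=> h; rewrite big_ltn; last lia.
rewrite ltnn /= add0n.
pose W v := shortfall j.+1 v ((n - lo).-1 - v).
rewrite (eq_big_nat _ _ (F2 := fun b => W (lcount lo n lo b))).
  rewrite sum_lcount_from_lo; last lia.
  by rewrite /W /shortfall big_split /= sum_subn_binom2_widen ?sum_subn_rev_binom2; lia.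
move=> b /andP[lb bn].
rewrite /in_border lb /= (_ : lo < lo + j.+1) ?mul1n; last lia.
have := @lcount_add_rcount lo n lo b (negbT (ltn_eqF lb)) (ltac:(lia)) (ltac:(lia)).
by rewrite /W => E; congr shortfall; lia.
Qed.

Lemma far_side_column_lower lo n j b : 2 * j + 3 <= n - lo -> n - j <= b <= n ->
  b + j.+1 - n <= \sum_(lo.+1 <= a < n.+1) (a < b) * far_side_shallow lo n j a b.
Proof.
move=> h /andP[hb1 hb2].
set x := j - (n - b).
have lb : lo < b by lia.
apply: (@leq_trans (\sum_(lo.+1 <= a < b)
          ((if D lo b then rcount lo b a b else lcount lo b a b) <= x))).
  have := @sum_side_count_to_hi lo b (D lo b) (fun v => nat_of_bool (v <= x)) lb.
  rewrite sum_leq_bool; last lia.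
  rewrite big_ltn //.
  have Hc : lcount lo b lo b + rcount lo b lo b = b.+1 - lo - 2.
    by rewrite lcount_add_rcount //; [apply/eqP; lia|lia|lia].
  have -> : (if D lo b then rcount lo b lo b else lcount lo b lo b) <= x = false.
    move: Hc; rewrite lcount_corner //.
    by case: (D lo b) => /= Hc; apply/negbTE; rewrite -ltnNge; lia.
  by rewrite add0n => ->; lia.
rewrite (big_cat_nat (n:=b) (m:=lo.+1) (p:=n.+1)) /=; [|lia|lia].
apply: leq_trans (leq_addr _ _); apply: leq_sum_nat => a /andP[ha1 ha2].
rewrite ha2 mul1n /far_side_shallow ccw312 //.
have Hl := @lcount_recl lo b a b ha1 lb (ltnW lb).
have Hr := @rcount_recl lo b a b ha1 lb (ltnW lb).
have Dl := @lcount_shrink_hi lo.+1 n b a b (ltac:(lia)) hb2.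
have Dr := @rcount_shrink_hi lo.+1 n b a b (ltac:(lia)) hb2.
rewrite ccw312 // in Hl Hr.
case: (D lo b) Hl Hr => /= Hl Hr.
- case: (leqP (rcount lo b a b) x) => //= hx.
  by rewrite (_ : rcount lo.+1 n a b <= j) //; lia.
- case: (leqP (lcount lo b a b) x) => //= hx.
  by rewrite (_ : lcount lo.+1 n a b <= j) //; lia.
Qed.

Lemma border_shortfall_step lo n j : 2 * j + 3 <= n - lo ->
  2 * 'C(j.+2, 2) + border_shortfall lo.+1 n j +
  \sum_(lo.+1 <= a < n.+1) \sum_(lo.+1 <= b < n.+1)
     ((a < b) && (n - j <= b)) * far_side_shallow lo n j a b
  <= border_shortfall lo n j.+1.
Proof.
move=> h; rewrite [border_shortfall lo n j.+1]/border_shortfall [X in _ <= X]big_ltn; last lia.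
rewrite first_row_shortfall // -addnA leq_add2l /border_shortfall -big_split /=.
apply: leq_sum_nat => a /andP[la an].
rewrite [X in _ <= X]big_ltn; last lia.
rewrite (_ : a < lo = false) /= ?add0n; last lia.
rewrite -big_split /=; apply: leq_sum_nat => b /andP[lb bn].
case: (ltnP a b) => ab //=.
rewrite -(shortfall_recl j la lb (ltnW (leq_trans lb bn))).
have -> : in_border lo n j.+1 a b = in_border lo.+1 n j a b || (n - j <= b).
  by rewrite /in_border addnS -addSn; case: (a < _) => //=; apply/idP/idP; lia.
by case: (in_border _ _ _ _ _); case: (n - j <= b); rewrite /= ?mul1n ?mul0n; lia.
Qed.

Lemma far_side_lower lo n j : 2 * j + 3 <= n - lo ->
  'C(j.+2, 2) <= \sum_(lo.+1 <= a < n.+1) \sum_(lo.+1 <= b < n.+1)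
                   ((a < b) && (n - j <= b)) * far_side_shallow lo n j a b.
Proof.
move=> h; rewrite exchange_big /= (big_cat_nat (n:=n - j) (m:=lo.+1) (p:=n.+1)) /=; [|lia|lia].
apply: leq_trans (leq_addl _ _).
apply: (@leq_trans (\sum_(n - j <= b < n.+1) (b + j.+1 - n))).
  rewrite -{1}(add0n (n - j)) big_addn (_ : n.+1 - (n - j) = j.+1); last lia.
  by rewrite -sum_succ_binom2; apply: leq_sum_nat => t ht; lia.
apply: leq_sum_nat => b /andP[hb1 hb2].
apply: (leq_trans (far_side_column_lower h (ltac:(lia) : n - j <= b <= n))).
by apply: leq_sum_nat => a _; rewrite hb1 andbT.
Qed.

Lemma border_shortfall_lower n j lo : 2 * j + 1 <= n - lo ->
  3 * 'C(j.+2, 3) <= border_shortfall lo n j.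
Proof.
elim: j lo => [|j IH] lo h; first by rewrite bin_small.
have h' : 2 * j + 3 <= n - lo by lia.
apply: leq_trans (border_shortfall_step h').
have := IH lo.+1 (ltac:(lia)); have := far_side_lower h'.
rewrite [in X in _ -> _ -> X]binS [in X in _ -> _ -> X]mulnDr; lia.
Qed.

End SideCounts.

Lemma sum_nat_bool_pairs lo hi (x : nat -> bool) :
  (\sum_(lo <= r < hi) x r) * (\sum_(lo <= r < hi) x r).-1 =
  \sum_(lo <= r < hi) \sum_(lo <= s < hi) (r != s) * (x r * x s).
Proof.
have E : (\sum_(lo <= r < hi) x r) * (\sum_(lo <= r < hi) x r) =
   (\sum_(lo <= r < hi) x r) + \sum_(lo <= r < hi) \sum_(lo <= s < hi) (r != s) * (x r * x s).
  rewrite big_distrl /= -big_split /=; apply: eq_big_nat => r hr.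
  rewrite big_distrr /= (eq_bigr (fun s => (r == s) * (x r * x s) + (r != s) * (x r * x s))).
    by rewrite big_split /= sum_nat_mul_eq hr mul1n; case: (x r).
  by move=> s _; case: (r == s); rewrite /= ?mul1n ?mul0n ?addn0.
by rewrite -subn1 mulnBr muln1 E addKn.
Qed.

Definition sum4 n (F : nat -> nat -> nat -> nat -> nat) :=
  \sum_(1 <= a < n.+1) \sum_(1 <= b < n.+1) \sum_(1 <= c < n.+1) \sum_(1 <= d < n.+1) F a b c d.

Lemma eq_sum4 n F G : (forall a b c d, F a b c d = G a b c d) -> sum4 n F = sum4 n G.
Proof.
move=> FG; rewrite /sum4; apply: eq_bigr => a _; apply: eq_bigr => b _;
apply: eq_bigr => c _; apply: eq_bigr => d _; exact: FG.
Qed.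

Lemma sum4D n F G : sum4 n (fun a b c d => F a b c d + G a b c d) = sum4 n F + sum4 n G.
Proof.
rewrite /sum4 -big_split; apply: eq_bigr => a _; rewrite -big_split; apply: eq_bigr => b _;
rewrite -big_split; apply: eq_bigr => c _; rewrite -big_split //.
Qed.

Lemma sum4_distrr n k F : sum4 n (fun a b c d => k * F a b c d) = k * sum4 n F.
Proof.
rewrite /sum4 big_distrr; apply: eq_bigr => a _; rewrite big_distrr; apply: eq_bigr => b _;
rewrite big_distrr; apply: eq_bigr => c _; rewrite big_distrr //.
Qed.

Lemma sum4_swap12 n F : sum4 n F = sum4 n (fun a b c d => F b a c d).
Proof. by rewrite /sum4 exchange_big. Qed.
Lemma sum4_swap23 n F : sum4 n F = sum4 n (fun a b c d => F a c b d).
Proof. by rewrite /sum4; apply: eq_bigr => a _; rewrite exchange_big. Qed.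
Lemma sum4_swap34 n F : sum4 n F = sum4 n (fun a b c d => F a b d c).
Proof. by rewrite /sum4; apply: eq_bigr => a _; apply: eq_bigr => b _; rewrite exchange_big. Qed.

Definition increasing4 n := sum4 n (fun x y z t => [&& x < y, y < z & z < t]).

Lemma increasing4E n : increasing4 n = 'C(n, 4).
Proof.
rewrite /increasing4 /sum4 -sum_binom_subn; apply: eq_big_nat => x /andP[_ hx].
rewrite -sum_gt_binom; last lia. apply: eq_big_nat => y /andP[_ hy].
rewrite -sum_gt_binom; last lia. rewrite big_distrr; apply: eq_big_nat => z /andP[_ hz].
rewrite -sum_gt_binom; last lia. rewrite !big_distrr; apply: eq_bigr => t _.
by rewrite bin0 muln1; case: (x < y); case: (y < z); case: (z < t).
Qed.

Definition off_edge (a b r s : nat) := [&& r != a, r != b, s != a & s != b].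

Lemma ordered_pairs_split a b r s :
  ((a < b) && (r < s) && off_edge a b r s) =
  [&& a < b, b < r & r < s] + [&& a < r, r < b & b < s] + [&& a < r, r < s & s < b] +
  [&& r < a, a < b & b < s] + [&& r < a, a < s & s < b] + [&& r < s, s < a & a < b] :> nat.
Proof.
rewrite /off_edge.
case: (ltngtP a b) => h1; case: (ltngtP r s) => h2; rewrite ?andbF ?andbT //=;
case: (ltngtP a r) => h3; case: (ltngtP a s) => h4; case: (ltngtP b r) => h5;
case: (ltngtP b s) => h6 //=; lia.
Qed.

Section Crossings.
Variable D : drawing.

Definition same_side a b r s : nat := (ccw D a b r == ccw D a b s).

Lemma same_side_4set x y z t : x < y -> y < z -> z < t ->
  same_side x y z t + same_side x z y t + same_side x t y z + same_side y z x t
  + same_side y t x z + same_side z t x y = 3 + (D x z == D y t).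
Proof.
move=> h1 h2 h3.
have h4 : x < z by lia. have h5 : x < t by lia. have h6 : y < t by lia.
rewrite /same_side (ccw123 D h1 h2) (ccw123 D h1 h6) (ccw132 D h1 h2) (ccw123 D h4 h3)
  (ccw132 D h1 h6) (ccw132 D h4 h3) (ccw312 D h1 h2) (ccw123 D h2 h3)
  (ccw312 D h1 h6) (ccw132 D h2 h3) (ccw312 D h4 h3) (ccw312 D h2 h3).
by case: (D x z); case: (D x t); case: (D y t).
Qed.

Lemma side_pairs_edge n a b :
  lcount D 1 n a b * (lcount D 1 n a b).-1 + rcount D 1 n a b * (rcount D 1 n a b).-1 =
  \sum_(1 <= r < n.+1) \sum_(1 <= s < n.+1) ((r != s) && off_edge a b r s) * same_side a b r s.
Proof.
rewrite /lcount /rcount !sum_nat_bool_pairs -big_split; apply: eq_bigr => r _.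
rewrite -big_split; apply: eq_bigr => s _; rewrite /off_edge /same_side.
case: (r != s); case: (r != a); case: (r != b); case: (s != a); case: (s != b);
by case: (ccw D a b r); case: (ccw D a b s).
Qed.

Lemma sum_side_pairs_ordered n :
  \sum_(1 <= a < n.+1) \sum_(1 <= b < n.+1) (a < b) *
     (lcount D 1 n a b * (lcount D 1 n a b).-1 + rcount D 1 n a b * (rcount D 1 n a b).-1)
  = 2 * sum4 n (fun a b r s => ((a < b) && (r < s) && off_edge a b r s) * same_side a b r s).
Proof.
rewrite mul2n -addnn.
transitivity (sum4 n (fun a b r s => ((a < b) && (r < s) && off_edge a b r s) * same_side a b r s)
            + sum4 n (fun a b r s => ((a < b) && (s < r) && off_edge a b r s) * same_side a b r s)).
  rewrite -sum4D /sum4; apply: eq_bigr => a _; apply: eq_bigr => b _.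
  rewrite side_pairs_edge big_distrr; apply: eq_bigr => r _; rewrite big_distrr.
  apply: eq_bigr => s _; case: (a < b); case: (ltngtP r s) => h;
  by rewrite /= ?mul0n ?muln0 ?add0n ?addn0 ?mul1n ?andbF.
congr (_ + _); rewrite [RHS]sum4_swap34; apply: eq_sum4 => a b r s.
rewrite /off_edge /same_side [ccw D a b s == _]eq_sym.
by case: (r != a); case: (r != b); case: (s != a); case: (s != b); rewrite /= ?andbF.
Qed.

Lemma sum_same_side_ordered n :
  sum4 n (fun a b r s => ((a < b) && (r < s) && off_edge a b r s) * same_side a b r s)
  = sum4 n (fun x y z t => [&& x < y, y < z & z < t] *
      (same_side x y z t + same_side x z y t + same_side x t y z + same_side y z x t
       + same_side y t x z + same_side z t x y)).
Proof.
under eq_sum4 do rewrite ordered_pairs_split !mulnDl.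
rewrite !sum4D; under [RHS]eq_sum4 do rewrite !mulnDr; rewrite !sum4D.
congr (_ + _ + _ + _ + _ + _).
- by rewrite [LHS]sum4_swap23.
- by rewrite [LHS]sum4_swap23 [LHS]sum4_swap34.
- by rewrite [LHS]sum4_swap23 [LHS]sum4_swap12.
- by rewrite [LHS]sum4_swap23 [LHS]sum4_swap12 [LHS]sum4_swap34.
- by rewrite [LHS]sum4_swap23 [LHS]sum4_swap12 [LHS]sum4_swap34 [LHS]sum4_swap23.
Qed.

Lemma sum_side_pairs n :
  \sum_(1 <= a < n.+1) \sum_(1 <= b < n.+1) (a < b) *
     (lcount D 1 n a b * (lcount D 1 n a b).-1 + rcount D 1 n a b * (rcount D 1 n a b).-1)
  = 2 * (3 * 'C(n, 4) + crossings n D).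
Proof.
rewrite sum_side_pairs_ordered sum_same_side_ordered -increasing4E; congr (_ * _).
rewrite /increasing4 -sum4_distrr /crossings -sum4D; apply: eq_sum4 => x y z t.
case: (ltnP x y) => h1; case: (ltnP y z) => h2; case: (ltnP z t) => h3;
rewrite /= ?muln0 ?mul0n //.
by rewrite mul1n same_side_4set //; case: (D x z == D y t).
Qed.

End Crossings.

Definition balanced_pairs N := N./2 * (N./2).-1 + (N - N./2) * (N - N./2).-1.

Definition shortfall_weight N j := if j < N./2 then 2 else N.+1 - (N./2).*2.

Lemma mul_predn_add x : x * x.-1 + x = x * x.
Proof. by case: x => //= x; rewrite [in RHS]mulnSr. Qed.

Lemma side_pairs_unbalance L d e : e <= 1 ->
  L * L.-1 + (L + 2 * d + e) * (L + 2 * d + e).-1 =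
  (L + d) * (L + d).-1 + (L + d + e) * (L + d + e).-1 + 2 * (d * d.-1 + e.+1 * d).
Proof.
move=> he.
have := mul_predn_add L; have := mul_predn_add (L + 2 * d + e); have := mul_predn_add (L + d).
have := mul_predn_add (L + d + e); have := mul_predn_add d.
move: (L * L.-1) (d * d.-1) ((L + 2 * d + e) * (L + 2 * d + e).-1) ((L + d) * (L + d).-1)
  ((L + d + e) * (L + d + e).-1) => *; lia.
Qed.

Lemma sum_subn_offset L d : \sum_(1 <= j < L + d) (j - L) = 'C(d, 2).
Proof.
elim: d => [|d IH].
  by rewrite addn0 big_nat_cond big1 // => j /andP[/andP[_ hj] _]; lia.
case: (posnP (L + d)) => h0.
  have -> : d = 0 by lia.
  have -> : L = 0 by lia.
  by rewrite big_geq.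
by rewrite addnS big_nat_recr //= IH binS bin1 addKn.
Qed.

Lemma side_pairs_decomposition N L R : 2 <= N -> L + R = N ->
  L * L.-1 + R * R.-1 = balanced_pairs N
    + 2 * \sum_(1 <= j < (N./2).+1) shortfall_weight N j * shortfall j L R.
Proof.
move=> N2; wlog: L R / L <= R.
  move=> W; case: (leqP L R) => hLR E; first exact: W.
  rewrite addnC (W R L (ltnW hLR)) ?(addnC R) //.
  by congr (_ + 2 * _); apply: eq_bigr => j _; rewrite /shortfall addnC.
move=> hLR E; rewrite /balanced_pairs /shortfall_weight; set M := N./2.
have hN : N = M.*2 + odd N by rewrite addnC odd_double_half.
have he : odd N <= 1 by case: (odd N).
have hM : 1 <= M by move: hN; lia.
rewrite big_nat_recr //= ltnn.
rewrite (eq_big_nat _ _ (F2 := fun j => 2 * (j - L))); last first.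
  by move=> j /andP[_ hj]; rewrite hj /shortfall; congr (_ * _); lia.
rewrite -big_distrr /= (_ : M = L + (M - L)) ?sum_subn_offset; last lia.
rewrite -(@mul_bin_diag (M - L) 1) bin1 /shortfall (_ : L + (M - L) - R = 0); last lia.
set d := M - L.
have -> : R = L + 2 * d + odd N by move: hN; rewrite /d; lia.
have -> : N - (L + d) = L + d + odd N by move: hN; rewrite /d; lia.
have -> : N.+1 - (L + d).*2 = (odd N).+1 by move: hN; rewrite /d; lia.
by rewrite addn0 (_ : L + d - L = d) ?side_pairs_unbalance //; lia.
Qed.

Lemma shortfall_bound_even m :
  'C(m.*2.+4, 2) * (m.+1 * m + m.+1 * m) + 2 * (6 * 'C(m.+3, 4) + 3 * 'C(m.+3, 3))
  = 2 * (3 * 'C(m.*2.+4, 4) + Z (m.*2.+4)).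
Proof.
rewrite /Z.
have -> : (m.*2.+4)./2 = m.+2 by rewrite (_ : m.*2.+4 = false + (m.+2).*2) ?half_bit_double //=; lia.
have -> : (m.*2.+4 - 1)./2 = m.+1.
  by rewrite (_ : m.*2.+4 - 1 = true + (m.+1).*2) ?half_bit_double //=; lia.
have -> : (m.*2.+4 - 2)./2 = m.+1.
  by rewrite (_ : m.*2.+4 - 2 = false + (m.+1).*2) ?half_bit_double //=; lia.
have -> : (m.*2.+4 - 3)./2 = m by rewrite (_ : m.*2.+4 - 3 = true + m.*2) ?half_bit_double //=; lia.
have hd : m.+2 * m.+1 * m.+1 * m = (m.+2 * m.+1 * m.+1 * m) %/ 4 * 4.
  rewrite divnK // (_ : m.+2 * m.+1 * m.+1 * m = (m.+2 * m.+1) * (m.+1 * m)); last lia.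
  by rewrite (_ : 4 = 2 * 2) // dvdn_mul // dvdn2 oddM /=; case: (odd m).
move: hd; set Y := _ %/ 4 => hd.
have b2 := binom2_mul (m.*2.+4); have b3 := binom3_mul m.+1; have b4 := binom4_mul m.
have b4' := binom4_mul (m.*2.+1); rewrite /= in b2 b4'.
lia.
Qed.

Lemma shortfall_bound_odd m :
  'C(m.*2 + 5, 2) * (m.+1 * m + m.+2 * m.+1) + 2 * (6 * 'C(m.+3, 4) + 2 * (3 * 'C(m.+3, 3)))
  = 2 * (3 * 'C(m.*2 + 5, 4) + Z (m.*2 + 5)).
Proof.
rewrite /Z.
have -> : (m.*2 + 5)./2 = m.+2 by rewrite (_ : m.*2 + 5 = true + (m.+2).*2) ?half_bit_double //=; lia.
have -> : (m.*2 + 5 - 1)./2 = m.+2.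
  by rewrite (_ : m.*2 + 5 - 1 = false + (m.+2).*2) ?half_bit_double //=; lia.
have -> : (m.*2 + 5 - 2)./2 = m.+1.
  by rewrite (_ : m.*2 + 5 - 2 = true + (m.+1).*2) ?half_bit_double //=; lia.
have -> : (m.*2 + 5 - 3)./2 = m.+1.
  by rewrite (_ : m.*2 + 5 - 3 = false + (m.+1).*2) ?half_bit_double //=; lia.
have hd : m.+2 * m.+2 * m.+1 * m.+1 = (m.+2 * m.+2 * m.+1 * m.+1) %/ 4 * 4.
  rewrite divnK // (_ : m.+2 * m.+2 * m.+1 * m.+1 = (m.+2 * m.+1) * (m.+2 * m.+1)); last lia.
  by rewrite (_ : 4 = 2 * 2) // dvdn_mul // dvdn2 oddM /=; case: (odd m).
move: hd; set Y := _ %/ 4 => hd.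
have b2 : 'C(m.*2 + 5, 2) * 2 = (m.*2 + 5) * (m.*2 + 4).
  by rewrite binom2_mul (_ : (m.*2 + 5).-1 = m.*2 + 4) //; lia.
have b3 := binom3_mul m.+1; have b4 := binom4_mul m.
have b4' : 'C(m.*2 + 5, 4) * 24 = (m.*2 + 5) * (m.*2 + 4) * (m.*2 + 3) * (m.*2 + 2).
  by rewrite (_ : m.*2 + 5 = (m.*2.+2).+3) ?binom4_mul; lia.
lia.
Qed.

Lemma shortfall_bound_total n : 4 <= n ->
  'C(n, 2) * balanced_pairs (n - 2)
  + 2 * \sum_(1 <= j < ((n - 2)./2).+1) shortfall_weight (n - 2) j * (3 * 'C(j.+2, 3))
  = 2 * (3 * 'C(n, 4) + Z n).
Proof.
move=> hn; rewrite /balanced_pairs /shortfall_weight.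
set N2 := n - 2; set M := N2./2.
have hN : N2 = M.*2 + odd N2 by rewrite addnC odd_double_half.
have hM : 1 <= M by move: hN; rewrite /N2; lia.
rewrite big_nat_recr //= ltnn.
rewrite (eq_big_nat _ _ (F2 := fun j => 6 * 'C(j.+2, 3))); last first.
  by move=> j /andP[_ ->]; rewrite mulnA.
rewrite -big_distrr /= sum_binom3_hockey //.
have [m hm] : exists m, M = m.+1 by exists M.-1; lia.
have hn' : n = m.*2.+4 + odd N2 by move: hN; rewrite /N2 hm; lia.
move: hN; rewrite hm -/N2.
case: (odd N2) hn' => hn' hN.
- have -> : N2 - m.+1 = m.+2 by lia.
  have -> : N2.+1 - (m.+1).*2 = 2 by lia.
  rewrite hn' /= (_ : m.*2.+4 + 1 = m.*2 + 5); last lia.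
  by rewrite -shortfall_bound_odd; lia.
- have -> : N2 - m.+1 = m.+1 by lia.
  have -> : N2.+1 - (m.+1).*2 = 1 by lia.
  by rewrite hn' addn0 -shortfall_bound_even /=; lia.
Qed.

Section TotalShortfall.
Variable D : drawing.

Definition total_shortfall n j := \sum_(1 <= a < n.+1) \sum_(1 <= b < n.+1)
  (a < b) * shortfall j (lcount D 1 n a b) (rcount D 1 n a b).

Lemma total_shortfall_split n j : border_shortfall D 1 n j
  + \sum_(1 <= a < n.+1) \sum_(1 <= b < n.+1) ((a < b) && ~~ in_border 1 n j a b)
      * shortfall j (lcount D 1 n a b) (rcount D 1 n a b)
  = total_shortfall n j.
Proof.
rewrite /border_shortfall /total_shortfall -big_split; apply: eq_bigr => a _.
rewrite -big_split; apply: eq_bigr => b _ /=.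
by case: (a < b); case: (in_border 1 n j a b); rewrite /= ?mul0n ?add0n ?addn0.
Qed.

Lemma total_shortfall_lower n j : 2 * j + 2 <= n -> 3 * 'C(j.+2, 3) <= total_shortfall n j.
Proof.
move=> jn; rewrite -total_shortfall_split.
by apply: leq_trans (leq_addr _ _); apply: border_shortfall_lower; lia.
Qed.

Lemma total_shortfall_lower_strict n k i j :
  2 * k + 4 <= n -> 1 <= i -> i < j -> j <= n -> k.+1 < i -> j < n - k ->
  edge_index n D i j <= k -> 3 * 'C(k.+3, 3) < total_shortfall n k.+1.
Proof.
move=> kn hi ij jn ki jk idx; rewrite -total_shortfall_split -addn1.
apply: leq_add; first by apply: border_shortfall_lower; lia.
pose F a b := ((a < b) && ~~ in_border 1 n k.+1 a b)
                * shortfall k.+1 (lcount D 1 n a b) (rcount D 1 n a b).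
apply: leq_trans (@leq_term_sum_nat 1 n.+1 (fun a => \sum_(1 <= b < n.+1) F a b) i _); last lia.
apply: leq_trans (@leq_term_sum_nat 1 n.+1 (F i) j _); last lia.
rewrite /F ij /in_border (_ : i < 1 + k.+1 = false); last by apply/negbTE; lia.
rewrite (_ : n - k.+1 < j = false) /= ?mul1n /shortfall; last by apply/negbTE; lia.
by move: idx; rewrite /edge_index /left_count /right_count -/(lcount D 1 n i j)
  -/(rcount D 1 n i j); lia.
Qed.

Lemma sum_side_pairs_shortfall n : 4 <= n ->
  \sum_(1 <= a < n.+1) \sum_(1 <= b < n.+1) (a < b) *
     (lcount D 1 n a b * (lcount D 1 n a b).-1 + rcount D 1 n a b * (rcount D 1 n a b).-1)
  = 'C(n, 2) * balanced_pairs (n - 2)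
    + 2 * \sum_(1 <= j < ((n - 2)./2).+1) shortfall_weight (n - 2) j * total_shortfall n j.
Proof.
move=> hn; set w := shortfall_weight (n - 2); set J := ((n - 2)./2).+1.
pose y j a b := (a < b) * shortfall j (lcount D 1 n a b) (rcount D 1 n a b).
have -> : \sum_(1 <= j < J) w j * total_shortfall n j
        = \sum_(1 <= a < n.+1) \sum_(1 <= b < n.+1) \sum_(1 <= j < J) w j * y j a b.
  transitivity (\sum_(1 <= j < J) \sum_(1 <= a < n.+1) \sum_(1 <= b < n.+1) w j * y j a b).
    by apply: eq_bigr => j _; rewrite big_distrr; apply: eq_bigr => a _; rewrite big_distrr.
  by rewrite exchange_big; apply: eq_bigr => a _; rewrite exchange_big.
rewrite -sum_ltn_pairs big_distrl big_distrr -big_split /=; apply: eq_big_nat => a ha.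
rewrite big_distrl big_distrr -big_split /=; apply: eq_big_nat => b hb.
case: (ltnP a b) => ab; last by rewrite !mul0n add0n big1 // => j _; rewrite /y ltnNge ab muln0.
rewrite !mul1n (@side_pairs_decomposition (n - 2)); [|lia|].
  by congr (_ + 2 * _); apply: eq_bigr => j _; rewrite /y ab mul1n.
by rewrite lcount_add_rcount; [lia | rewrite neq_ltn ab | lia | lia].
Qed.

End TotalShortfall.

Theorem lemma15 (n : nat) (D : drawing) (k : nat) :
  normalized n D -> crossing_optimal n D -> k + 2 <= n./2 ->
  forall i j : nat, 1 <= i -> i < j -> j <= n ->
    edge_index n D i j <= k ->
    i <= k.+1 \/ n - k <= j.
Proof.
move=> _ opt hk i j hi ij jn idx.
case: (leqP i k.+1) => [|ki]; first by left.
case: (leqP (n - k) j) => [|jk]; first by right.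
exfalso.
have hn : 4 <= n by lia.
have hkM : 1 <= k.+1 < ((n - 2)./2).+1 by lia.
have := sum_side_pairs D n; rewrite sum_side_pairs_shortfall // opt.
have := shortfall_bound_total hn.
have : \sum_(1 <= j < ((n - 2)./2).+1) shortfall_weight (n - 2) j * (3 * 'C(j.+2, 3))
     < \sum_(1 <= j < ((n - 2)./2).+1) shortfall_weight (n - 2) j * total_shortfall D n j.
  apply: (ltn_sum_nat _ hkM).
    by move=> t ht; rewrite leq_mul2l total_shortfall_lower ?orbT //; lia.
  rewrite ltn_pmul2l; last by rewrite /shortfall_weight; case: ifP; lia.
  by apply: (total_shortfall_lower_strict (i := i) (j := j)); lia.
lia.
Qed.
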